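(* Let $K$ be a field with $\mathrm{char}(K)\ne 2$ and $E$ a row-finite graph. Then the following are equivalent: (i) $\mathbf{K}_{L_K(E)}$ is Lie solvable; (ii) $\mathbf{K}_{L_K(E)}$ is Lie nilpotent; (iii) $E$ is a disjoint union of graphs of types $E_1$, $E_2$ and $E_4$.
   Context: A graph is row-finite if no vertex emits infinitely many edges. Graphs: $E_1$: a single vertex, no edges. $E_2$: a single vertex with one loop. $E_4$: a vertex $u$ and a nonempty set of distinct vertices $u_i$ ($i\in I$), exactly one edge $u\to u_i$ for each $i$, no other edges. ''Disjoint union of graphs of the listed types'' means every connected component is isomorphic to one of them. $L_K(E)$ is the Leavitt path algebra: the free $K$-algebra generated by $E^0\cup E^1\cup\{e^*:e\in E^1\}$ subject to $vv'=\delta_{v,v'}v$; $s(e)e=er(e)=e$; $r(e)e^*=e^*s(e)=e^*$; $e^*f=\delta_{e,f}r(e)$; $v=\sum_{s(e)=v}ee^*$ for every non-sink vertex $v$. The standard involution ${}^\star$ is the $K$-linear involution with $v^\star=v$, $e^\star=e^*$, $(e^* )^\star=e$; $\mathbf{K}_{L_K(E)}=\{x: x^\star=-x\}$ with bracket $[a,b]=ab-ba$. $\mathcal{L}^{(0)}=\mathcal{L}$, $\mathcal{L}^{(n)}=[\mathcal{L}^{(n-1)},\mathcal{L}^{(n-1)}]$; $\mathcal{L}^0=\mathcal{L}$, $\mathcal{L}^n=[\mathcal{L}^{n-1},\mathcal{L}]$; Lie solvable (resp. nilpotent) means $\mathcal{L}^{(n)}=0$ (resp. $\mathcal{L}^n=0$)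 for some $n$. *)

From HB Require Import structures.
From mathcomp Require Import all_boot all_order all_algebra.
From Stdlib Require Import Relations.Relation_Operators.
Set Implicit Arguments. Unset Strict Implicit. Unset Printing Implicit Defensive.
Import GRing.Theory.
Local Open Scope ring_scope.

Section Graphs.
Variables (V : Type) (Ed : Type) (s r : Ed -> V).

Definition row_finite {Ed' : eqType} (s' : Ed' -> V) : Prop :=
  forall v : V, exists es : seq Ed', uniq es /\ forall e, s' e = v <-> e \in es.

Definition adj (u v : V) : Prop := exists e, s e = u /\ r e = v.

Definition conn : V -> V -> Prop := clos_refl_sym_trans V adj.

Lemma conn_rng (v0 : V) (e : Ed) : conn v0 (s e) -> conn v0 (r e).
Proof.
move=> H; apply: rst_trans H _; apply: rst_step; by exists e.
Qed.

Definition compV (v0 : V) := {v : V | conn v0 v}.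
Definition compE (v0 : V) := {e : Ed | conn v0 (s e)}.
Definition comp_s (v0 : V) (e : compE v0) : compV v0 :=
  exist _ (s (proj1_sig e)) (proj2_sig e).
Definition comp_r (v0 : V) (e : compE v0) : compV v0 :=
  exist _ (r (proj1_sig e)) (conn_rng (proj2_sig e)).
End Graphs.

Definition graph_iso (V1 E1 : Type) (s1 r1 : E1 -> V1)
                     (V2 E2 : Type) (s2 r2 : E2 -> V2) : Prop :=
  exists (fV : V1 -> V2) (fE : E1 -> E2),
    bijective fV /\ bijective fE /\
    forall e, s2 (fE e) = fV (s1 e) /\ r2 (fE e) = fV (r1 e).

Definition E1_s (e : Empty_set) : unit := match e with end.
Definition E1_r (e : Empty_set) : unit := match e with end.
Definition E2_s (e : unit) : unit := tt.
Definition E2_r (e : unit) : unit := tt.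
(* E_4 (index set I) : vertex u = None, vertices u_i = Some i, edges u -> u_i *)
Definition E4_s (I : Type) (i : I) : option I := None.
Definition E4_r (I : Type) (i : I) : option I := Some i.

(* every connected component is isomorphic to E_1, E_2 or some E_4 *)
Definition disjoint_union_E1_E2_E4 (V Ed : Type) (s r : Ed -> V) : Prop :=
  forall v0 : V,
    graph_iso (@comp_s V Ed s r v0) (@comp_r V Ed s r v0) E1_s E1_r \/
    graph_iso (@comp_s V Ed s r v0) (@comp_r V Ed s r v0) E2_s E2_r \/
    exists (I : Type), inhabited I /\
      graph_iso (@comp_s V Ed s r v0) (@comp_r V Ed s r v0) (@E4_s I) (@E4_r I).

Section Algebras.
Variable K : fieldType.

Definition nalg_axioms (A : lmodType K) (mul : A -> A -> A) : Prop :=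
  [/\ forall x y z, mul x (mul y z) = mul (mul x y) z,
      forall x y z, mul (x + y) z = mul x z + mul y z,
      forall x y z, mul x (y + z) = mul x y + mul x z,
      forall (k : K) x y, mul (k *: x) y = k *: mul x y
    & forall (k : K) x y, mul x (k *: y) = k *: mul x y].

Variables (V : Type) (Ed : eqType) (s r : Ed -> V).

Definition leavitt_family (A : lmodType K) (mul : A -> A -> A)
    (vA : V -> A) (eA esA : Ed -> A) : Prop :=
  (forall v, mul (vA v) (vA v) = vA v) /\
  (forall v v', v <> v' -> mul (vA v) (vA v') = 0) /\
  (forall e, mul (vA (s e)) (eA e) = eA e /\ mul (eA e) (vA (r e)) = eA e) /\
  (forall e, mul (vA (r e)) (esA e) = esA e /\ mul (esA e) (vA (s e)) = esA e) /\
  (forall e, mul (esA e) (eA e) = vA (r e)) /\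
  (forall e f, e <> f -> mul (esA e) (eA f) = 0) /\
  (forall v (es : seq Ed), uniq es -> (forall e, s e = v <-> e \in es) ->
     es <> [::] -> vA v = \sum_(e <- es) mul (eA e) (esA e)).

Definition generated_by (A : lmodType K) (mul : A -> A -> A)
    (vA : V -> A) (eA esA : Ed -> A) : Prop :=
  forall P : A -> Prop,
    (forall v, P (vA v)) -> (forall e, P (eA e)) -> (forall e, P (esA e)) ->
    P 0 -> (forall x y, P x -> P y -> P (x + y)) ->
    (forall (k : K) x, P x -> P (k *: x)) ->
    (forall x y, P x -> P y -> P (mul x y)) ->
    forall x, P x.

(* (A, mul, vA, eA, esA) is the Leavitt path algebra L_K(E): the free     *)
(* K-algebra on the generators subject to the Leavitt relations, given by *)
(* its universal property (plus generation, which gives uniqueness).      *)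
Definition is_leavitt_path_algebra (A : lmodType K) (mul : A -> A -> A)
    (vA : V -> A) (eA esA : Ed -> A) : Prop :=
  [/\ nalg_axioms mul, leavitt_family mul vA eA esA,
      generated_by mul vA eA esA &
      forall (B : lmodType K) (mulB : B -> B -> B) (vB : V -> B) (eB esB : Ed -> B),
        nalg_axioms mulB -> leavitt_family mulB vB eB esB ->
        exists f : A -> B,
          (forall x y, f (x + y) = f x + f y) /\
          (forall (k : K) x, f (k *: x) = k *: f x) /\
          (forall x y, f (mul x y) = mulB (f x) (f y)) /\
          (forall v, f (vA v) = vB v) /\
          (forall e, f (eA e) = eB e) /\
          (forall e, f (esA e) = esB e)].

Definition standard_involution (A : lmodType K) (mul : A -> A -> A)
    (vA : V -> A) (eA esA : Ed -> A) (star : A -> A) : Prop :=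
  (forall x y, star (x + y) = star x + star y) /\
  (forall (k : K) x, star (k *: x) = k *: star x) /\
  (forall x y, star (mul x y) = mul (star y) (star x)) /\
  (forall x, star (star x) = x) /\
  (forall v, star (vA v) = vA v) /\
  (forall e, star (eA e) = esA e) /\
  (forall e, star (esA e) = eA e).
End Algebras.

Section Lie.
Variables (K : fieldType) (A : lmodType K) (mul : A -> A -> A) (star : A -> A).

Definition skew (x : A) : Prop := star x = - x.

Definition lie_br (x y : A) : A := mul x y - mul y x.

Inductive kspan (G : A -> Prop) : A -> Prop :=
  | kspan_gen x : G x -> kspan G x
  | kspan_0 : kspan G 0
  | kspan_add x y : kspan G x -> kspan G y -> kspan G (x + y)
  | kspan_scale (k : K) x : kspan G x -> kspan G (k *: x).

Definition lie_bracket_set (X Y : A -> Prop) : A -> Prop :=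
  kspan (fun z => exists x y, X x /\ Y y /\ z = lie_br x y).

Fixpoint derived (n : nat) : A -> Prop :=
  match n with
  | 0 => skew
  | n'.+1 => lie_bracket_set (derived n') (derived n')
  end.

Fixpoint lower_central (n : nat) : A -> Prop :=
  match n with
  | 0 => skew
  | n'.+1 => lie_bracket_set (lower_central n') skew
  end.

Definition lie_solvable : Prop := exists n, forall x, derived n x -> x = 0.
Definition lie_nilpotent : Prop := exists n, forall x, lower_central n x -> x = 0.
End Lie.

From Pilot Require Import Defs.
From HB Require Import structures.
From mathcomp Require Import all_boot all_order all_algebra.
From mathcomp Require Import boolp zify.
From Stdlib Require Import Relations.Relation_Operators ProofIrrelevance.
Import GRing.Theory.
Local Open Scope ring_scope.
Set Implicit Arguments. Unset Strict Implicit. Unset Printing Implicit Defensive.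

(** If every component of E is a vertex, a loop or a star u -> u_i, then L_K(E) is spanned
    by the vertices, the subalgebras generated by v, l, l^* for the loops l at v (commutative,
    as l l^* = v = l^* l) and the elements e, e^*, e e^* of the non-loop edges e. Hence every
    x - x^* is a combination of loop-algebra elements and of differences e - e^*, and these
    pairwise commute. As char K <> 2 every skew element k is half of k - k^*, so the skew
    elements commute and K_{L_K(E)} is abelian.

    Otherwise E contains two edges with a common range, a loop with an exit, or a path of two
    non-loop edges. Apart from an exitless loop entered from outside and an exitless 2-cycle,
    such a configuration provides partial isometries g_0, g_1, g_2 with g_i^* g_j = δ_ij p,
    p <> 0; the skew parts of the matrix units g_i g_j^* then span a copy of so(3), which is
    perfect. In the two exitless cases the cycle yields t commuting with a partial isometry h;
    c = t - t^* is skew and commutes with the 2 x 2 matrix units built from h and p = h^* h, and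
    the elements c^(2a) X, c^(2b+1) H, c^(2b+1) P of this twisted sl_2 survive in every derived
    term. The non-vanishing of p and of c^m p is read off a representation of L_K(E) on
    functions of a maximal path and a degree, where c acts as a difference of opposite shifts.
    The derived series lies in the lower central series, so neither property holds. *)

Lemma proj1_sig_inj (T : Type) (P : T -> Prop) (x y : {v | P v}) :
  proj1_sig x = proj1_sig y -> x = y.
Proof. by case: x y => [x px] [y py] /= E; apply: subset_eq_compat. Qed.

Lemma inj_surj_bijective (T1 T2 : Type) (f : T1 -> T2) :
  injective f -> (forall y, exists x, f x = y) -> bijective f.
Proof.
move=> fI fS; exists (fun y => proj1_sig (cid (fS y))) => [x|y]; case: cid => //= x'.
exact: fI.
Qed.

Lemma graph_iso_sym (V1 E1 : Type) (s1 r1 : E1 -> V1) (V2 E2 : Type) (s2 r2 : E2 -> V2) :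
  graph_iso s1 r1 s2 r2 -> graph_iso s2 r2 s1 r1.
Proof.
move=> [fV [fE [[gV fVK gVK] [[gE fEK gEK] fsr]]]].
exists gV, gE; split; first exact: Bijective gVK fVK.
split; first exact: Bijective gEK fEK.
by move=> e; have [es er] := fsr (gE e); rewrite gEK in es er; rewrite es er !fVK.
Qed.

#[local] Arguments rst_trans {A R x y z}.
#[local] Arguments rst_sym {A R x y}.

Section Graph.
Variables (V Ed : Type) (s r : Ed -> V).
Local Notation conn := (conn s r).
Local Notation comp_iso v0 s' r' :=
  (graph_iso (@comp_s V Ed s r v0) (@comp_r V Ed s r v0) s' r').

Lemma conn_src v0 g : conn v0 (r g) -> conn v0 (s g).
Proof. by move=> H; apply: rst_trans H _; apply/rst_sym/rst_step; exists g. Qed.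

Lemma conn_invariant v0 (P : V -> Prop) :
  (forall g, conn v0 (s g) -> P (s g) -> P (r g)) ->
  (forall g, conn v0 (r g) -> P (r g) -> P (s g)) ->
  forall a, conn v0 a -> P a -> forall v, conn v0 v -> P v.
Proof.
move=> Pfwd Pbwd.
suff PE x y : conn x y -> conn v0 x -> P x <-> P y.
  move=> a va Pa v vv; apply/(PE a v) => //.
  exact: rst_trans (rst_sym va) vv.
elim=> {x y} [x y [g [<- <-]] vx | x _ | x y xy IH vy | x y z xy IHxy yz IHyz vx].
- by split; [exact: Pfwd | apply: Pbwd; exact: conn_rng].
- by [].
- by rewrite (IH (rst_trans vy (rst_sym xy))).
- by rewrite (IHxy vx) (IHyz (rst_trans vx xy)).
Qed.

Lemma disjoint_union_loop : disjoint_union_E1_E2_E4 s r ->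
  forall l g, s l = r l -> s g = s l \/ r g = s l -> g = l.
Proof.
move=> DU l g ll gl.
have cl : conn (s l) (s l) by apply: rst_refl.
have cg : conn (s l) (s g).
  by case: gl => E; [rewrite E | apply: conn_src; rewrite E]; apply: rst_refl.
pose el : compE s r (s l) := exist _ l cl.
pose eg : compE s r (s l) := exist _ g cg.
case: (DU (s l)) => [[fV [fE _]] | [[fV [fE [_ [[gE fEK _] _]]]] |
                     [I [_ [fV [fE [_ [_ fsr]]]]]]]].
- by case: (fE el).
- have E : fE eg = fE el by case: (fE eg); case: (fE el).
  by have := congr1 (@proj1_sig _ _) (can_inj fEK E).
- have [sl rl] := fsr el.
  have slrl : comp_s el = comp_r el by apply: proj1_sig_inj; rewrite /= ll.
  by move: sl; rewrite slrl -rl.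
Qed.

Lemma disjoint_union_nonloop : disjoint_union_E1_E2_E4 s r ->
  forall e, s e <> r e ->
  [/\ forall g, s g <> r e, forall g, r g <> s e & forall g, r g = r e -> g = e].
Proof.
move=> DU e ne.
have ce : conn (s e) (s e) by apply: rst_refl.
pose ee : compE s r (s e) := exist _ e ce.
case: (DU (s e)) => [[fV [fE _]] | [[fV [fE [[gV fVK _] _]]] |
                     [I [_ [fV [fE [_ [[gE fEK _] fsr]]]]]]]].
- by case: (fE ee).
- have E : fV (comp_s ee) = fV (comp_r ee) by case: (fV _); case: (fV _).
  by have := congr1 (@proj1_sig _ _) (can_inj fVK E).
- have [se re] := fsr ee.
  split=> g E.
  + have cg : conn (s e) (s g) by rewrite E; apply: conn_rng.
    have [sg _] := fsr (exist _ g cg).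
    have E' : comp_s (exist _ g cg) = comp_r ee by apply: proj1_sig_inj.
    by move: sg; rewrite E' -re.
  + have cg : conn (s e) (s g) by apply: conn_src; rewrite E.
    have [_ rg] := fsr (exist _ g cg).
    have E' : comp_r (exist _ g cg) = comp_s ee by apply: proj1_sig_inj.
    by move: rg; rewrite E' -se.
  + have cg : conn (s e) (s g) by apply: conn_src; rewrite E; apply: conn_rng.
    have [_ rg] := fsr (exist _ g cg).
    have E' : comp_r (exist _ g cg) = comp_r ee by apply: proj1_sig_inj.
    by move: rg; rewrite E' -re => -[/(can_inj fEK)/(congr1 (@proj1_sig _ _))].
Qed.

Section GoodGraph.
Hypothesis rng_inj : injective r.
Hypothesis loop_no_exit : forall l g, s l = r l -> s g = s l -> g = l.
Hypothesis no_nonloop_path2 : forall e f, s e <> r e -> s f <> r f -> r e <> s f.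

Lemma component_E1 v0 : (forall g, ~ conn v0 (s g)) -> comp_iso v0 E1_s E1_r.
Proof.
move=> no_edge; apply: graph_iso_sym.
have only_v0 : forall v, conn v0 v -> v = v0.
  apply: (@conn_invariant v0 (eq^~ v0) _ _ v0 (rst_refl _ _ _) erefl) => g cg.
  - by case: (no_edge g).
  - by case: (no_edge g); apply: conn_src.
exists (fun _ => exist _ v0 (rst_refl _ _ v0)), (fun e : Empty_set => match e with end).
split; [|split]; last by case.
- exists (fun _ => tt) => [[]//|x]; apply: proj1_sig_inj.
  by rewrite /= (only_v0 _ (proj2_sig x)).
- exists (fun x => match no_edge _ (proj2_sig x) with end) => [[]|x].
  by case: (no_edge _ (proj2_sig x)).
Qed.

Lemma component_E2 v0 g0 : conn v0 (s g0) -> s g0 = r g0 -> comp_iso v0 E2_s E2_r.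
Proof.
move=> cg0 loop0; apply: graph_iso_sym.
have only_g0 g : s g = s g0 -> g = g0 by apply: loop_no_exit.
have only_base : forall v, conn v0 v -> v = s g0.
  apply: (@conn_invariant v0 (eq^~ (s g0)) _ _ _ cg0 erefl) => g _ E.
  - by rewrite (only_g0 g E).
  - by rewrite (rng_inj (etrans E loop0)).
exists (fun _ => exist _ (s g0) cg0), (fun _ => exist _ g0 cg0).
split; [|split]; last by move=> _; split; apply: proj1_sig_inj.
- exists (fun _ => tt) => [[]//|x]; apply: proj1_sig_inj.
  by rewrite /= (only_base _ (proj2_sig x)).
- exists (fun _ => tt) => [[]//|x]; apply: proj1_sig_inj.
  by rewrite /= (only_g0 _ (only_base _ (proj2_sig x))).
Qed.

Lemma nonloop_src_out_nonloop g0 f : s g0 <> r g0 -> s f = s g0 -> s f <> r f.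
Proof.
move=> nloop0 sf lf; apply: nloop0.
by rewrite (loop_no_exit lf (esym sf)).
Qed.

Lemma nonloop_src_no_in g0 g : s g0 <> r g0 -> r g <> s g0.
Proof.
move=> nloop0 rg; have [lg|ng] := pselect (s g = r g).
  by apply: nloop0; rewrite (loop_no_exit lg (esym (etrans lg rg))).
exact: no_nonloop_path2 ng nloop0 rg.
Qed.

Lemma nonloop_src_out_sink g0 f g : s g0 <> r g0 -> s f = s g0 -> s g <> r f.
Proof.
move=> nloop0 /(nonloop_src_out_nonloop nloop0) nf sg.
have [lg|ng] := pselect (s g = r g); last exact: no_nonloop_path2 nf ng (esym sg).
by apply: nf; rewrite -(rng_inj (etrans (esym lg) sg)).
Qed.

Lemma component_E4 v0 g0 : conn v0 (s g0) -> s g0 <> r g0 ->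
  exists I : Type, inhabited I /\ comp_iso v0 (@E4_s I) (@E4_r I).
Proof.
move=> cg0 nloop0; set u := s g0.
have no_into_u g : r g <> u := @nonloop_src_no_in g0 g nloop0.
have no_after_out f g : s f = u -> s g <> r f := @nonloop_src_out_sink g0 f g nloop0.
have vertices : forall v, conn v0 v -> v = u \/ exists2 f, s f = u & r f = v.
  apply: (@conn_invariant v0 _ _ _ u cg0 (or_introl erefl)) => g _.
  - case=> [sg|[f sf rf]]; first by right; exists g.
    by case: (no_after_out f g sf (esym rf)).
  - case=> [rg|[f sf rf]]; first by case: (no_into_u g).
    by left; rewrite -(rng_inj rf).
have edges g : conn v0 (s g) -> s g = u.
  by case/vertices=> [//|[f sf rf]]; case: (no_after_out f g sf (esym rf)).
pose I := {f : Ed | s f = u}.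
have cI (i : I) : conn v0 (s (proj1_sig i)) by rewrite (proj2_sig i).
exists I; split; first exact: inhabits (exist _ g0 erefl).
apply: graph_iso_sym.
exists (fun o => if o is Some i then exist _ (r (proj1_sig i)) (conn_rng (cI i))
                 else exist _ u cg0 : compV s r v0).
exists (fun i => exist _ (proj1_sig i) (cI i) : compE s r v0).
split; [|split].
- apply: inj_surj_bijective.
  + case=> [i|] [j|] /(congr1 (@proj1_sig _ _)) //= E.
    * by congr Some; apply/proj1_sig_inj/rng_inj.
    * by case: (no_into_u _ E).
    * by case: (no_into_u _ (esym E)).
  + move=> x; case: (vertices _ (proj2_sig x)) => [xu|[f sf rf]].
    * by exists None; apply: proj1_sig_inj.
    * by exists (Some (exist _ f sf)); apply: proj1_sig_inj.
- by exists (fun x => exist _ (proj1_sig x) (edges _ (proj2_sig x)) : I) => ?;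
    apply: proj1_sig_inj.
- by move=> i; split; apply: proj1_sig_inj; rewrite /= ?(proj2_sig i).
Qed.

Lemma good_graph_disjoint_union : disjoint_union_E1_E2_E4 s r.
Proof.
move=> v0; have [[g0 cg0]|no_edge] := pselect (exists g, conn v0 (s g)).
- have [loop0|nloop0] := pselect (s g0 = r g0).
  + by right; left; exact: component_E2 cg0 loop0.
  + by right; right; exact: component_E4 cg0 nloop0.
- by left; apply: component_E1 => g cg; apply: no_edge; exists g.
Qed.

End GoodGraph.
End Graph.

Section LinearOperators.
Variables (K : fieldType) (V Ed : Type).

CoInductive path := Stop of V | Cons of Ed & path.

Definition fn := path -> int -> K.
Definition fn_add (f g : fn) : fn := fun q n => f q n + g q n.
Definition fn_scale (k : K) (f : fn) : fn := fun q n => k * f q n.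

Lemma fn_ext (f g : fn) : (forall q n, f q n = g q n) -> f = g.
Proof. by move=> fg; apply/funext => q; apply/funext => n; apply: fg. Qed.

Record linop := Linop {
  app : fn -> fn;
  appD : forall f g, app (fn_add f g) = fn_add (app f) (app g);
  appZ : forall k f, app (fn_scale k f) = fn_scale k (app f) }.

Lemma linop_ext (x y : linop) : (forall f q n, app x f q n = app y f q n) -> x = y.
Proof.
case: x y => [x xD xZ] [y yD yZ] /= xy.
have E : x = y by apply/funext => f; apply: fn_ext; apply: xy.
by subst y; congr Linop; apply: proof_irrelevance.
Qed.

Program Definition linop_add (x y : linop) : linop :=
  @Linop (fun f => fn_add (app x f) (app y f)) _ _.
Next Obligation. by apply: fn_ext => q n; rewrite !appD /fn_add addrACA. Qed.
Next Obligation. by apply: fn_ext => q n; rewrite !appZ /fn_add /fn_scale mulrDr. Qed.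

Program Definition linop_opp (x : linop) : linop := @Linop (fun f q n => - app x f q n) _ _.
Next Obligation. by apply: fn_ext => q n; rewrite appD /fn_add opprD. Qed.
Next Obligation. by apply: fn_ext => q n; rewrite appZ /fn_scale mulrN. Qed.

Program Definition linop0 : linop := @Linop (fun f q n => 0) _ _.
Next Obligation. by apply: fn_ext => q n; rewrite /fn_add addr0. Qed.
Next Obligation. by apply: fn_ext => q n; rewrite /fn_scale mulr0. Qed.

Program Definition linop_scale (k : K) (x : linop) : linop :=
  @Linop (fun f q n => k * app x f q n) _ _.
Next Obligation. by apply: fn_ext => q n; rewrite appD /fn_add mulrDr. Qed.
Next Obligation. by apply: fn_ext => q n; rewrite appZ /fn_scale mulrCA. Qed.

Program Definition linop_mul (x y : linop) : linop := @Linop (fun f => app x (app y f)) _ _.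
Next Obligation. by rewrite !appD. Qed.
Next Obligation. by rewrite !appZ. Qed.

Lemma linop_addA : associative linop_add.
Proof. by move=> x y z; apply: linop_ext => f q n /=; rewrite /fn_add addrA. Qed.
Lemma linop_addC : commutative linop_add.
Proof. by move=> x y; apply: linop_ext => f q n /=; rewrite /fn_add addrC. Qed.
Lemma linop_add0 : left_id linop0 linop_add.
Proof. by move=> x; apply: linop_ext => f q n /=; rewrite /fn_add add0r. Qed.
Lemma linop_addN : left_inverse linop0 linop_opp linop_add.
Proof. by move=> x; apply: linop_ext => f q n /=; rewrite /fn_add addNr. Qed.

HB.instance Definition _ := gen_eqMixin linop.
HB.instance Definition _ := gen_choiceMixin linop.
HB.instance Definition _ := GRing.isZmodule.Build linop
  linop_addA linop_addC linop_add0 linop_addN.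

Lemma linop_scaleA a b x : linop_scale a (linop_scale b x) = linop_scale (a * b) x.
Proof. by apply: linop_ext => f q n /=; rewrite mulrA. Qed.
Lemma linop_scale1 : left_id 1 linop_scale.
Proof. by move=> x; apply: linop_ext => f q n /=; rewrite mul1r. Qed.
Lemma linop_scaleDr : right_distributive linop_scale +%R.
Proof. by move=> a x y; apply: linop_ext => f q n /=; rewrite /fn_add mulrDr. Qed.
Lemma linop_scaleDl x : {morph linop_scale^~ x : a b / a + b}.
Proof. by move=> a b; apply: linop_ext => f q n /=; rewrite /fn_add mulrDl. Qed.

HB.instance Definition _ := GRing.Zmodule_isLmodule.Build K linop
  linop_scaleA linop_scale1 linop_scaleDr linop_scaleDl.

Lemma app_add (x y : linop) f q n : app (x + y) f q n = app x f q n + app y f q n.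
Proof. by []. Qed.
Lemma app_opp (x : linop) f q n : app (- x) f q n = - app x f q n.
Proof. by []. Qed.
Lemma app_mul (x y : linop) f : app (linop_mul x y) f = app x (app y f).
Proof. by []. Qed.
Lemma app_sum (I : Type) (es : seq I) (F : I -> linop) f q n :
  app (\sum_(i <- es) F i) f q n = \sum_(i <- es) app (F i) f q n.
Proof. by elim: es => [|i es IH]; rewrite ?big_nil // !big_cons app_add IH. Qed.

Lemma linop_nalg : nalg_axioms linop_mul.
Proof.
split=> [x y z | x y z | x y z | k x y | k x y]; apply: linop_ext => //= f q n.
- by rewrite appD.
- by rewrite appZ.
Qed.

End LinearOperators.

Section PathRepresentation.
Variables (K : fieldType) (V : Type) (Ed : eqType) (s r : Ed -> V).
Local Notation path := (path V Ed).
Local Notation fn := (fn K V Ed).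
Local Notation linop := (linop K V Ed).

CoInductive maxpath : V -> path -> Prop :=
| maxpath_stop v : (forall e, s e <> v) -> maxpath v (Stop Ed v)
| maxpath_cons v e q : s e = v -> maxpath (r e) q -> maxpath v (Cons e q).

Lemma maxpath_consE v e q : maxpath v (Cons e q) <-> s e = v /\ maxpath (r e) q.
Proof.
split=> [mp | [se mq]]; last exact: maxpath_cons.
refine (match mp in maxpath v' q' return
    (if q' is Cons e' q'' then s e' = v' /\ maxpath (r e') q'' else True) with
  | maxpath_stop _ _ => I | maxpath_cons _ _ _ se mq => conj se mq end).
Qed.

Lemma maxpath_stopE v w : maxpath v (Stop Ed w) -> w = v /\ forall e, s e <> v.
Proof.
move=> mp; refine (match mp in maxpath v' q' return
    (if q' is Stop w' then w' = v' /\ forall e, s e <> v' else True) with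
  | maxpath_stop _ no_out => conj erefl no_out | maxpath_cons _ _ _ _ _ => I end).
Qed.

Lemma maxpath_uniq v w q : maxpath v q -> maxpath w q -> v = w.
Proof.
case: q => [x | e q]; first by move=> /maxpath_stopE[-> _] /maxpath_stopE[-> _].
by move=> /maxpath_consE[<- _] /maxpath_consE[<- _].
Qed.

Lemma maxpath_coind (P : V -> path -> Prop) :
  (forall v q, P v q -> if q is Cons e q' then s e = v /\ P (r e) q'
                       else q = Stop Ed v /\ forall e, s e <> v) ->
  forall v q, P v q -> maxpath v q.
Proof.
move=> Pstep; cofix CIH => v q Pvq.
move: (Pstep v q Pvq); case: q Pvq => [w | e q'] _ [E H].
- by rewrite E; apply: maxpath_stop.
- exact: maxpath_cons E (CIH _ _ H).
Qed.

Definition next_edge (v : V) : option Ed :=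
  if pselect (exists e, s e = v) is left ex then Some (proj1_sig (cid ex)) else None.

Lemma next_edgeP v : if next_edge v is Some e then s e = v else forall e, s e <> v.
Proof.
rewrite /next_edge; case: pselect => [ex | no_out]; first by case: (cid ex).
by move=> e se; apply: no_out; exists e.
Qed.

CoFixpoint canon_path (v : V) : path :=
  if next_edge v is Some e then Cons e (canon_path (r e)) else Stop Ed v.

Lemma canon_pathE v :
  canon_path v = if next_edge v is Some e then Cons e (canon_path (r e)) else Stop Ed v.
Proof.
have unfoldE (q : path) :
    match q with Stop w => Stop Ed w | Cons e q' => Cons e q' end = q by case: q.
by rewrite -[LHS]unfoldE /=; case: (next_edge v).
Qed.

Lemma maxpath_canon v : maxpath v (canon_path v).
Proof.
apply: (@maxpath_coind (fun v q => q = canon_path v)) => // {}v _ ->.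
by rewrite canon_pathE; have := next_edgeP v; case: (next_edge v).
Qed.

Definition guard (P : Prop) (x : K) : K := if pselect P then x else 0.

Lemma guardT (P : Prop) : P -> forall x, guard P x = x.
Proof. by move=> HP x; rewrite /guard; case: pselect. Qed.
Lemma guardF (P : Prop) : ~ P -> forall x, guard P x = 0.
Proof. by move=> NP x; rewrite /guard; case: pselect. Qed.
Lemma guard0 (P : Prop) : guard P 0 = 0.
Proof. by rewrite /guard; case: pselect. Qed.
Lemma guardD (P : Prop) x y : guard P (x + y) = guard P x + guard P y.
Proof. by rewrite /guard; case: (pselect P) => _ /=; rewrite ?addr0. Qed.
Lemma guardZ (P : Prop) k x : guard P (k * x) = k * guard P x.
Proof. by rewrite /guard; case: (pselect P) => _ /=; rewrite ?mulr0. Qed.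

(* On maximal paths, [rep_e e] sends f to (e q, n) |-> f (q, n - 1) and [rep_g e] sends f to
   (q, n) |-> f (e q, n + 1); the degree n keeps the powers of t - t^* apart. *)
Program Definition rep_v (v : V) : linop :=
  @Linop K V Ed (fun f q n => guard (maxpath v q) (f q n)) _ _.
Next Obligation. by apply: fn_ext => q n; rewrite /fn_add guardD. Qed.
Next Obligation. by apply: fn_ext => q n; rewrite /fn_scale guardZ. Qed.

Program Definition rep_e (e : Ed) : linop := @Linop K V Ed (fun f q n =>
  if q is Cons e' q' then guard (e' = e /\ maxpath (r e) q') (f q' (n - 1)) else 0) _ _.
Next Obligation. by apply: fn_ext => -[w | e' q'] n; rewrite /fn_add ?guardD ?addr0. Qed.
Next Obligation. by apply: fn_ext => -[w | e' q'] n; rewrite /fn_scale ?guardZ ?mulr0. Qed.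

Program Definition rep_g (e : Ed) : linop :=
  @Linop K V Ed (fun f q n => guard (maxpath (r e) q) (f (Cons e q) (n + 1))) _ _.
Next Obligation. by apply: fn_ext => q n; rewrite /fn_add guardD. Qed.
Next Obligation. by apply: fn_ext => q n; rewrite /fn_scale guardZ. Qed.

Lemma rep_vE v f q n : app (rep_v v) f q n = guard (maxpath v q) (f q n).
Proof. by []. Qed.
Lemma rep_eE e f e' q n :
  app (rep_e e) f (Cons e' q) n = guard (e' = e /\ maxpath (r e) q) (f q (n - 1)).
Proof. by []. Qed.
Lemma rep_gE e f q n :
  app (rep_g e) f q n = guard (maxpath (r e) q) (f (Cons e q) (n + 1)).
Proof. by []. Qed.

Lemma rep_CK v (es : seq Ed) : uniq es -> (forall e, s e = v <-> e \in es) -> es <> [::] ->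
  rep_v v = \sum_(e <- es) linop_mul (rep_e e) (rep_g e).
Proof.
move=> es_uniq es_out es_nil; apply: linop_ext => f [w | e' q] n; rewrite app_sum /=.
  rewrite big1 //; have [mv|nmv] := pselect (maxpath v (Stop Ed w)); last first.
    by rewrite (guardF nmv).
  have [_ no_out] := maxpath_stopE mv.
  by case: es es_uniq es_out es_nil => [//|e0 es0] _ es_out _; case: (no_out e0);
    apply/es_out; rewrite in_cons eqxx.
have others i : i != e' -> guard (e' = i /\ maxpath (r i) q)
    (guard (maxpath (r i) q) (f (Cons i q) (n - 1 + 1))) = 0.
  by move=> ie; rewrite guardF // => -[ei _]; move: ie; rewrite ei eqxx.
have [mv|nmv] := pselect (maxpath v (Cons e' q)).
  have [se mq] := (maxpath_consE _ _ _).1 mv.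
  rewrite (bigD1_seq e') //=; last by apply/es_out.
  rewrite big1 => [|i /others //].
  by rewrite addr0 (guardT mv) (guardT (conj erefl mq)) (guardT mq) subrK.
rewrite (guardF nmv) big1_seq // => i /andP[_ ies].
have [ie|/others //] := eqVneq i e'; subst i.
rewrite guardF // => -[_ mq]; apply/nmv/maxpath_consE; split=> //.
exact/es_out.
Qed.

Lemma rep_leavitt : leavitt_family s r (@linop_mul K V Ed) rep_v rep_e rep_g.
Proof.
split; [|split; [|split; [|split; [|split; [|split]]]]].
- move=> v; apply: linop_ext => f q n /=.
  by have [mv|nmv] := pselect (maxpath v q); rewrite ?(guardT mv) ?(guardF nmv).
- move=> v w vw; apply: linop_ext => f q n /=.
  have [mv|nmv] := pselect (maxpath v q); last by rewrite !(guardF nmv).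
  have [mw|nmw] := pselect (maxpath w q); last by rewrite (guardF nmw) guard0.
  by case: vw; apply: maxpath_uniq mv mw.
- move=> e; split; apply: linop_ext => f [w|e' q] n //=; rewrite ?guard0 //.
  + have [[-> mq]|nq] := pselect (e' = e /\ maxpath (r e) q); last first.
      by rewrite !(guardF nq) guard0.
    by rewrite !(guardT (conj erefl mq)) (guardT ((maxpath_consE _ _ _).2 (conj erefl mq))).
  + have [[-> mq]|nq] := pselect (e' = e /\ maxpath (r e) q); last by rewrite !(guardF nq).
    by rewrite !(guardT (conj erefl mq)) !(guardT mq).
- move=> e; split; apply: linop_ext => f q n /=.
  + by have [mq|nq] := pselect (maxpath (r e) q); rewrite ?(guardT mq) ?(guardF nq).
  + have [mq|nq] := pselect (maxpath (r e) q); last by rewrite !(guardF nq).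
    by rewrite !(guardT mq) (guardT ((maxpath_consE _ _ _).2 (conj erefl mq))).
- move=> e; apply: linop_ext => f q n /=.
  have [mq|nq] := pselect (maxpath (r e) q); last by rewrite !(guardF nq).
  by rewrite !(guardT mq) (guardT (conj erefl mq)) addrK.
- move=> e g eg; apply: linop_ext => f q n /=.
  by rewrite (guardF (P := e = g /\ _)) ?guard0 // => -[].
- move=> v es; exact: rep_CK.
Qed.

Lemma rep_vertex_neq0 w : rep_v w <> 0.
Proof.
move=> /(congr1 (fun x => app x (fun _ _ => 1) (canon_path w) 0)).
by rewrite rep_vE (guardT (maxpath_canon w)) => /eqP; rewrite oner_eq0.
Qed.

Lemma shift_iter_neq0 (T T' X : linop) q0 (d : int) : 0 < d ->
  (forall f n, app T f q0 n = f q0 (n - d)) ->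
  (forall f n, app T' f q0 n = f q0 (n + d)) ->
  (forall f n, app X f q0 n = f q0 n) ->
  forall m, iter m (linop_mul (T - T')) X <> 0.
Proof.
move=> d_gt0 Tq0 T'q0 Xq0 m.
pose delta : fn := fun _ n => if n == 0 then 1 else 0.
have top m' : (forall j, d *+ m' < j -> app (iter m' (linop_mul (T - T')) X) delta q0 j = 0) /\
    app (iter m' (linop_mul (T - T')) X) delta q0 (d *+ m') = 1.
  elim: m' => [|m' [above at_top]].
    by rewrite /= Xq0 /delta eqxx; split=> // j; rewrite Xq0 /delta; case: eqP => // ->.
  have step j : app (iter m'.+1 (linop_mul (T - T')) X) delta q0 j =
      app (iter m' (linop_mul (T - T')) X) delta q0 (j - d) -
      app (iter m' (linop_mul (T - T')) X) delta q0 (j + d).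
    by rewrite iterS app_mul app_add app_opp Tq0 T'q0.
  rewrite mulrSr !step addrK at_top above ?subr0; last lia.
  by split=> // j jtop; rewrite step !above ?subr0 //; lia.
have [_ at_top] := top m.
by move=> /(congr1 (fun x => app x delta q0 (d *+ m))); rewrite at_top => /eqP; rewrite oner_eq0.
Qed.

Lemma loop_rep_iter_neq0 e f w : s e = w -> r e = w -> (forall g, s g = w -> g = e) ->
  r f = w -> s f <> w ->
  forall m, iter m (linop_mul ((rep_e e + linop_mul (linop_mul (rep_e f) (rep_e e)) (rep_g f)) -
         (rep_g e + linop_mul (rep_e f) (linop_mul (rep_g e) (rep_g f))))) (rep_v w) <> 0.
Proof.
move=> se re only_e rf sf.
have ef : e <> f by move=> E; apply: sf; rewrite -E.
have [q0 [mq0 q0E]] : exists q0, maxpath w q0 /\ q0 = Cons e q0.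
  exists (canon_path w); split; first exact: maxpath_canon.
  rewrite {1}canon_pathE; have := next_edgeP w; case: (next_edge w) => [g /only_e -> | no_out].
    by rewrite re.
  by case: (no_out e).
have mre : maxpath (r e) q0 by rewrite re.
have f0 h k : app (rep_e f) h q0 k = 0.
  by rewrite {1}q0E rep_eE guardF // => -[].
apply: (@shift_iter_neq0 _ _ _ q0 1) => // h n.
- by rewrite app_add !app_mul f0 addr0 {1}q0E rep_eE (guardT (conj erefl mre)).
- by rewrite app_add !app_mul f0 addr0 rep_gE (guardT mre) -q0E.
- by rewrite rep_vE (guardT mq0).
Qed.

Lemma cycle2_rep_iter_neq0 e f u v : s e = u -> r e = v -> s f = v -> r f = u -> u <> v ->
  (forall g, s g = u -> g = e) -> (forall g, s g = v -> g = f) ->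
  forall m, iter m (linop_mul ((linop_mul (rep_e e) (rep_e f) + linop_mul (rep_e f) (rep_e e)) -
         (linop_mul (rep_g f) (rep_g e) + linop_mul (rep_g e) (rep_g f)))) (rep_v v) <> 0.
Proof.
move=> se re sf rf uv only_e only_f.
have fe : f <> e by move=> E; apply: uv; rewrite -se -sf E.
have [q0 [q1 [mq0 mq1 q0E q1E]]] : exists q0 q1, [/\ maxpath v q0, maxpath u q1,
    q0 = Cons f q1 & q1 = Cons e q0].
  exists (canon_path v), (canon_path u); split.
  - exact: maxpath_canon.
  - exact: maxpath_canon.
  - rewrite {1}canon_pathE; have := next_edgeP v.
    by case: (next_edge v) => [g /only_f -> | no_out]; [rewrite rf | case: (no_out f)].
  - rewrite {1}canon_pathE; have := next_edgeP u.
    by case: (next_edge u) => [g /only_e -> | no_out]; [rewrite re | case: (no_out e)].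
have mre : maxpath (r e) q0 by rewrite re.
have mrf : maxpath (r f) q1 by rewrite rf.
have e0 h k : app (rep_e e) h q0 k = 0.
  by rewrite {1}q0E rep_eE guardF // => -[].
have g0 h k : app (rep_g f) h q0 k = 0.
  rewrite rep_gE guardF // rf q0E => /maxpath_consE[E _].
  by apply: uv; rewrite -E sf.
apply: (@shift_iter_neq0 _ _ _ q0 2) => // h n.
- rewrite app_add !app_mul e0 add0r {1}q0E rep_eE (guardT (conj erefl mrf)).
  rewrite {1}q1E rep_eE (guardT (conj erefl mre)).
  by congr (h q0 _); lia.
- rewrite app_add !app_mul g0 add0r rep_gE (guardT mre) rep_gE.
  have mc : maxpath (r f) (Cons e q0) by rewrite -q1E.
  by rewrite (guardT mc) -q1E -q0E; congr (h q0 _); lia.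
- by rewrite rep_vE (guardT mq0).
Qed.

End PathRepresentation.

Section LeavittAlgebra.
Variables (K : fieldType) (V : Type) (Ed : eqType) (s r : Ed -> V).
Variables (A : lmodType K) (mul : A -> A -> A) (vA : V -> A) (eA esA : Ed -> A).
Variable star : A -> A.
Local Notation "x ** y" := (mul x y) (at level 40, left associativity).

Hypothesis mul_nalg : nalg_axioms mul.

Lemma mulA x y z : x ** (y ** z) = x ** y ** z. Proof. by case: mul_nalg. Qed.
Lemma mulDl x y z : (x + y) ** z = x ** z + y ** z. Proof. by case: mul_nalg. Qed.
Lemma mulDr x y z : x ** (y + z) = x ** y + x ** z. Proof. by case: mul_nalg. Qed.
Lemma mulZl k x y : (k *: x) ** y = k *: (x ** y). Proof. by case: mul_nalg. Qed.
Lemma mulZr k x y : x ** (k *: y) = k *: (x ** y). Proof. by case: mul_nalg. Qed.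
Lemma mul0l y : 0 ** y = 0. Proof. by rewrite -(scale0r (0 : A)) mulZl !scale0r. Qed.
Lemma mul0r y : y ** 0 = 0. Proof. by rewrite -(scale0r (0 : A)) mulZr !scale0r. Qed.
Lemma mulNl x y : (- x) ** y = - (x ** y). Proof. by rewrite -scaleN1r mulZl scaleN1r. Qed.
Lemma mulNr x y : x ** (- y) = - (x ** y). Proof. by rewrite -scaleN1r mulZr scaleN1r. Qed.
Lemma mulBl x y z : (x - y) ** z = x ** z - y ** z. Proof. by rewrite mulDl mulNl. Qed.
Lemma mulBr x y z : x ** (y - z) = x ** y - x ** z. Proof. by rewrite mulDr mulNr. Qed.

Lemma kspan_mull (P : A -> Prop) x :
  (forall y, P y -> kspan P (x ** y)) -> forall y, kspan P y -> kspan P (x ** y).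
Proof.
move=> xP y; elim=> {y} [y /xP // | | y z _ Py _ Pz | k y _ Py].
- by rewrite mul0r; apply: kspan_0.
- by rewrite mulDr; apply: kspan_add.
- by rewrite mulZr; apply: kspan_scale.
Qed.

Lemma kspan_comm (P : A -> Prop) :
  (forall x y, P x -> P y -> x ** y = y ** x) ->
  forall x y, kspan P x -> kspan P y -> x ** y = y ** x.
Proof.
move=> Pcomm.
suff comm1 x y : P x -> kspan P y -> x ** y = y ** x.
  move=> x y Sx Sy; elim: Sx => {x} [x Px | | x z _ Hx _ Hz | k x _ Hx].
  - exact: comm1.
  - by rewrite mul0l mul0r.
  - by rewrite mulDl mulDr Hx Hz.
  - by rewrite mulZl mulZr Hx.
move=> Px; elim=> {y} [y Py | | y z _ Hy _ Hz | k y _ Hy].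
- exact: Pcomm.
- by rewrite mul0l mul0r.
- by rewrite mulDl mulDr Hy Hz.
- by rewrite mulZl mulZr Hy.
Qed.

Hypothesis leavitt : leavitt_family s r mul vA eA esA.

Lemma vertex_idem v : vA v ** vA v = vA v. Proof. by case: leavitt. Qed.
Lemma vertex_orth v w : v <> w -> vA v ** vA w = 0.
Proof. by case: leavitt => _ [+ _]; apply. Qed.
Lemma src_edge e : vA (s e) ** eA e = eA e.
Proof. by case: leavitt => _ [_ [+ _]] => /(_ e) []. Qed.
Lemma edge_rng e : eA e ** vA (r e) = eA e.
Proof. by case: leavitt => _ [_ [+ _]] => /(_ e) []. Qed.
Lemma rng_ghost e : vA (r e) ** esA e = esA e.
Proof. by case: leavitt => _ [_ [_ [+ _]]] => /(_ e) []. Qed.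
Lemma ghost_src e : esA e ** vA (s e) = esA e.
Proof. by case: leavitt => _ [_ [_ [+ _]]] => /(_ e) []. Qed.
Lemma ghost_edge e : esA e ** eA e = vA (r e).
Proof. by case: leavitt => _ [_ [_ [_ [+ _]]]]; apply. Qed.
Lemma ghost_edge_neq e f : e <> f -> esA e ** eA f = 0.
Proof. by case: leavitt => _ [_ [_ [_ [_ [+ _]]]]]; apply. Qed.

Lemma vertex_CK1 v e : (forall g, s g = v <-> g = e) -> vA v = eA e ** esA e.
Proof.
case: leavitt => _ [_ [_ [_ [_ [_ CK]]]]] only_e.
rewrite (CK v [:: e]) ?big_seq1 // => g.
by rewrite mem_seq1 only_e; split=> [->|/eqP].
Qed.

Lemma mul_vertex_mismatch x y a b :
  x ** vA a = x -> vA b ** y = y -> a <> b -> x ** y = 0.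
Proof. by move=> <- <- ab; rewrite mulA -(mulA x) vertex_orth // mul0r mul0l. Qed.

Lemma edge_edge0 e f : r e <> s f -> eA e ** eA f = 0.
Proof. exact: mul_vertex_mismatch (edge_rng e) (src_edge f). Qed.
Lemma edge_ghost0 e f : r e <> r f -> eA e ** esA f = 0.
Proof. exact: mul_vertex_mismatch (edge_rng e) (rng_ghost f). Qed.
Lemma ghost_ghost0 e f : s e <> r f -> esA e ** esA f = 0.
Proof. exact: mul_vertex_mismatch (ghost_src e) (rng_ghost f). Qed.
Lemma vertex_edge0 a e : a <> s e -> vA a ** eA e = 0.
Proof. exact: mul_vertex_mismatch (vertex_idem a) (src_edge e). Qed.

Lemma ghost_edgeA x e : x ** esA e ** eA e = x ** vA (r e).
Proof. by rewrite -mulA ghost_edge. Qed.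
Lemma ghost_edge_neqA x e f : e <> f -> x ** esA e ** eA f = 0.
Proof. by move=> ef; rewrite -mulA ghost_edge_neq // mul0r. Qed.
Lemma src_edgeA x e : x ** vA (s e) ** eA e = x ** eA e.
Proof. by rewrite -mulA src_edge. Qed.
Lemma edge_rngA x e : x ** eA e ** vA (r e) = x ** eA e.
Proof. by rewrite -mulA edge_rng. Qed.

Hypothesis involution : standard_involution mul vA eA esA star.

Lemma starD x y : star (x + y) = star x + star y. Proof. by case: involution. Qed.
Lemma starZ k x : star (k *: x) = k *: star x. Proof. by case: involution => _ []. Qed.
Lemma starM x y : star (x ** y) = star y ** star x.
Proof. by case: involution => _ [_ []]. Qed.
Lemma starK x : star (star x) = x. Proof. by case: involution => _ [_ [_ []]]. Qed.
Lemma star_vertex v : star (vA v) = vA v.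
Proof. by case: involution => _ [_ [_ [_ []]]]. Qed.
Lemma star_edge e : star (eA e) = esA e.
Proof. by case: involution => _ [_ [_ [_ [_ []]]]]. Qed.
Lemma star_ghost e : star (esA e) = eA e.
Proof. by case: involution => _ [_ [_ [_ [_ [_ ->]]]]]. Qed.
Lemma star0 : star 0 = 0. Proof. by rewrite -(scale0r (0 : A)) starZ !scale0r. Qed.
Lemma starN x : star (- x) = - star x. Proof. by rewrite -scaleN1r starZ scaleN1r. Qed.
Lemma starB x y : star (x - y) = star x - star y. Proof. by rewrite starD starN. Qed.

Local Notation skew := (Defs.skew star).

Lemma skew_lie_br x y : skew x -> skew y -> skew (lie_br mul x y).
Proof.
rewrite /Defs.skew /lie_br => sx sy.
by rewrite starB !starM sx sy !mulNl !mulNr !opprK opprB.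
Qed.

Lemma kspan_sub (P Q : A -> Prop) :
  (forall x, P x -> Q x) -> forall x, kspan P x -> kspan Q x.
Proof.
move=> PQ x; elim=> {x} [x /PQ | | x y _ | k x _]; last exact: kspan_scale.
- exact: kspan_gen.
- exact: kspan_0.
- by move=> Sx _; apply: kspan_add.
Qed.

Lemma kspan_skew (P : A -> Prop) : (forall x, P x -> skew x) -> forall x, kspan P x -> skew x.
Proof.
rewrite /Defs.skew => Pskew x; elim=> {x} [x /Pskew // | | x y _ sx _ sy | k x _ sx].
- by rewrite star0 oppr0.
- by rewrite starD sx sy opprD.
- by rewrite starZ sx scalerN.
Qed.

Lemma lower_central_skew n x : lower_central mul star n x -> skew x.
Proof.
elim: n x => [//|n IH] x /=; apply: kspan_skew => _ [a [b [ca [sb ->]]]].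
exact: skew_lie_br (IH a ca) sb.
Qed.

Lemma derived_lower_central n x : derived mul star n x -> lower_central mul star n x.
Proof.
elim: n x => [//|n IH] x /=; apply: kspan_sub => _ [a [b [da [db ->]]]].
by exists a, b; split; [exact: IH | split; [exact: lower_central_skew (IH b db) |]].
Qed.

Lemma commuting_skew_lie_nilpotent : (forall x y, skew x -> skew y -> x ** y = y ** x) ->
  lie_nilpotent mul star /\ lie_solvable mul star.
Proof.
move=> skew_comm.
have br0 x : lie_bracket_set mul skew skew x -> x = 0.
  elim=> {x} [_ [a [b [sa [sb ->]]]] | | x y _ -> _ -> | k x _ ->].
  - by rewrite /lie_br skew_comm // subrr.
  - by [].
  - by rewrite addr0.
  - by rewrite scaler0.
by split; exists 1%N.
Qed.

Definition derived_nonvanishing := forall n, exists2 x, derived mul star n x & x <> 0.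

Lemma derived_nonvanishing_not_solvable : derived_nonvanishing ->
  ~ lie_solvable mul star /\ ~ lie_nilpotent mul star.
Proof.
move=> nv; split=> -[n der0]; have [x dx] := nv n; apply.
- exact: der0.
- exact/der0/derived_lower_central.
Qed.

Section Sufficiency.
Hypothesis loop_isolated : forall l g, s l = r l -> s g = s l \/ r g = s l -> g = l.
Hypothesis nonloop_isolated : forall e, s e <> r e ->
  [/\ forall g, s g <> r e, forall g, r g <> s e & forall g, r g = r e -> g = e].

Inductive loop_alg (l : Ed) : A -> Prop :=
| loop_alg_vertex : loop_alg l (vA (s l))
| loop_alg_edge : loop_alg l (eA l)
| loop_alg_ghost : loop_alg l (esA l)
| loop_alg0 : loop_alg l 0
| loop_algD x y : loop_alg l x -> loop_alg l y -> loop_alg l (x + y)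
| loop_algZ k x : loop_alg l x -> loop_alg l (k *: x)
| loop_algM x y : loop_alg l x -> loop_alg l y -> loop_alg l (x ** y).

Lemma loop_algB l x y : loop_alg l x -> loop_alg l y -> loop_alg l (x - y).
Proof. by move=> ax ay; rewrite -scaleN1r; apply/loop_algD/loop_algZ. Qed.

Lemma loop_alg_star l x : loop_alg l x -> loop_alg l (star x).
Proof.
elim=> {x} [| | | | x y _ ax _ ay | k x _ ax | x y _ ax _ ay].
- by rewrite star_vertex; apply: loop_alg_vertex.
- by rewrite star_edge; apply: loop_alg_ghost.
- by rewrite star_ghost; apply: loop_alg_edge.
- by rewrite star0; apply: loop_alg0.
- by rewrite starD; apply: loop_algD.
- by rewrite starZ; apply: loop_algZ.
- by rewrite starM; apply: loop_algM.
Qed.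

Lemma loop_alg_unit l x : s l = r l -> loop_alg l x ->
  vA (s l) ** x = x /\ x ** vA (s l) = x.
Proof.
move=> ll; elim=> {x} [| | | | x y _ [xl xr] _ [yl yr] | k x _ [xl xr] | x y _ [xl _] _ [_ yr]].
- by rewrite vertex_idem.
- by rewrite src_edge ll edge_rng.
- by rewrite ghost_src ll rng_ghost.
- by rewrite mul0l mul0r.
- by rewrite mulDl mulDr xl xr yl yr.
- by rewrite mulZl mulZr xl xr.
- by rewrite mulA xl -mulA yr.
Qed.

Lemma loop_alg_centralizes l x :
  x ** vA (s l) = vA (s l) ** x -> x ** eA l = eA l ** x -> x ** esA l = esA l ** x ->
  forall y, loop_alg l y -> x ** y = y ** x.
Proof.
move=> cv ce cg y; elim=> {y} [//|//|//| | y z _ cy _ cz | k y _ cy | y z _ cy _ cz].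
- by rewrite mul0l mul0r.
- by rewrite mulDl mulDr cy cz.
- by rewrite mulZl mulZr cy.
- by rewrite mulA cy -mulA cz mulA.
Qed.

Lemma loop_alg_comm l x y : s l = r l -> loop_alg l x -> loop_alg l y -> x ** y = y ** x.
Proof.
move=> ll ax ay.
have loopCK : vA (s l) = eA l ** esA l.
  by apply: vertex_CK1 => g; split=> [sg|->]; first by apply: loop_isolated => //; left.
have ve : vA (s l) ** eA l = eA l ** vA (s l) by rewrite src_edge ll edge_rng.
have vg : vA (s l) ** esA l = esA l ** vA (s l) by rewrite ghost_src ll rng_ghost.
have eg : eA l ** esA l = esA l ** eA l by rewrite ghost_edge -ll -loopCK.
have cv := loop_alg_centralizes erefl ve vg.
have ce := loop_alg_centralizes (esym ve) erefl eg.
have cg := loop_alg_centralizes (esym vg) (esym eg) erefl.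
apply: loop_alg_centralizes ay; symmetry; [exact: cv | exact: ce | exact: cg].
Qed.

Inductive piece : V -> V -> A -> Prop :=
| piece_vertex v : piece v v (vA v)
| piece_loop l x : s l = r l -> loop_alg l x -> piece (s l) (s l) x
| piece_edge e : s e <> r e -> piece (s e) (r e) (eA e)
| piece_ghost e : s e <> r e -> piece (r e) (s e) (esA e)
| piece_proj e : s e <> r e -> piece (s e) (s e) (eA e ** esA e).

Local Notation pieces := (fun x => exists a b, piece a b x).

Lemma piece_ends a b x : piece a b x -> vA a ** x = x /\ x ** vA b = x.
Proof.
case=> [v | l y ll ly | e _ | e _ | e _].
- by rewrite vertex_idem.
- exact: loop_alg_unit.
- by rewrite src_edge edge_rng.
- by rewrite rng_ghost ghost_src.
- by rewrite mulA src_edge -mulA ghost_src.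
Qed.

Lemma edge_piece e : pieces (eA e).
Proof.
have [le|ne] := pselect (s e = r e); last by exists (s e), (r e); apply: piece_edge.
by exists (s e), (s e); apply: piece_loop (loop_alg_edge e).
Qed.

Lemma ghost_piece e : pieces (esA e).
Proof.
have [le|ne] := pselect (s e = r e); last by exists (r e), (s e); apply: piece_ghost.
by exists (s e), (s e); apply: piece_loop (loop_alg_ghost e).
Qed.

Lemma vertex_mul_piece v a b x : piece a b x -> kspan pieces (vA v ** x).
Proof.
move=> px; have [ax _] := piece_ends px.
have [->|va] := pselect (v = a); first by rewrite ax; apply: kspan_gen; exists a, b.
by rewrite (mul_vertex_mismatch (vertex_idem v) ax va); apply: kspan_0.
Qed.

Lemma edge_mul_piece e a b x : piece a b x -> kspan pieces (eA e ** x).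
Proof.
move=> px; have [ax _] := piece_ends px.
have [ea|ea] := pselect (r e = a); last first.
  by rewrite (mul_vertex_mismatch (edge_rng e) ax ea); apply: kspan_0.
case: px ea {ax} => [v <- | l y ll ly E | f nf E | f nf E | f nf E].
- by rewrite edge_rng; apply/kspan_gen/edge_piece.
- have -> : e = l by apply: loop_isolated => //; right.
  by apply: kspan_gen; exists (s l), (s l); apply/piece_loop/loop_algM/ly/loop_alg_edge.
- by case: (nonloop_isolated nf) => _ /(_ e).
- have [_ _ /(_ e E) ->] := nonloop_isolated nf.
  by apply: kspan_gen; exists (s f), (s f); apply: piece_proj.
- by case: (nonloop_isolated nf) => _ /(_ e).
Qed.

Lemma ghost_mul_piece e a b x : piece a b x -> kspan pieces (esA e ** x).
Proof.
move=> px; have [ax _] := piece_ends px.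
have [ea|ea] := pselect (s e = a); last first.
  by rewrite (mul_vertex_mismatch (ghost_src e) ax ea); apply: kspan_0.
case: px ea {ax} => [v <- | l y ll ly E | f nf E | f nf E | f nf E].
- by rewrite ghost_src; apply/kspan_gen/ghost_piece.
- have -> : e = l by apply: loop_isolated => //; left.
  by apply: kspan_gen; exists (s l), (s l); apply/piece_loop/loop_algM/ly/loop_alg_ghost.
- have [<-|ef] := pselect (e = f); last by rewrite ghost_edge_neq //; apply: kspan_0.
  by rewrite ghost_edge; apply: kspan_gen; exists (r e), (r e); apply: piece_vertex.
- by case: (nonloop_isolated nf) => /(_ e).
- rewrite mulA; have [<-|ef] := pselect (e = f); last first.
    by rewrite ghost_edge_neq // mul0l; apply: kspan_0.
  by rewrite ghost_edge rng_ghost; apply/kspan_gen/ghost_piece.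
Qed.

Hypothesis generated : generated_by mul vA eA esA.

Lemma span_pieces x : kspan pieces x.
Proof.
pose P x := kspan pieces x /\ forall y, kspan pieces y -> kspan pieces (x ** y).
have gen_P g : pieces g -> (forall a b y, piece a b y -> kspan pieces (g ** y)) -> P g.
  move=> pg gy; split; first exact: kspan_gen.
  by apply: kspan_mull => y [a [b /gy]].
suff [] : P x by [].
apply: generated.
- move=> v; apply: gen_P => [|a b y]; last exact: vertex_mul_piece.
  by exists v, v; apply: piece_vertex.
- by move=> e; apply: gen_P => [|a b y]; [exact: edge_piece | exact: edge_mul_piece].
- by move=> e; apply: gen_P => [|a b y]; [exact: ghost_piece | exact: ghost_mul_piece].
- by split=> [|y _]; rewrite ?mul0l; apply: kspan_0.
- move=> x1 x2 [S1 M1] [S2 M2]; split=> [|y Sy]; first exact: kspan_add.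
  by rewrite mulDl; apply: kspan_add; [apply: M1 | apply: M2].
- move=> k x1 [S1 M1]; split=> [|y Sy]; first exact: kspan_scale.
  by rewrite mulZl; apply/kspan_scale/M1.
- move=> x1 x2 [S1 M1] [S2 M2]; split=> [|y Sy]; first exact: M1.
  by rewrite -mulA; apply/M1/M2.
Qed.

Local Notation comm_piece := (fun y => (exists2 l, s l = r l & loop_alg l y) \/
  (exists2 e, s e <> r e & y = eA e - esA e)).

Lemma piece_sub_star a b x : piece a b x -> kspan comm_piece (x - star x).
Proof.
case=> [v | l y ll ly | e ne | e ne | e ne].
- by rewrite star_vertex subrr; apply: kspan_0.
- by apply: kspan_gen; left; exists l => //; apply/loop_algB/loop_alg_star.
- by rewrite star_edge; apply: kspan_gen; right; exists e.
- rewrite star_ghost -opprB -scaleN1r; apply: kspan_scale.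
  by apply: kspan_gen; right; exists e.
- by rewrite starM star_ghost star_edge subrr; apply: kspan_0.
Qed.

Lemma sub_star_span x : kspan comm_piece (x - star x).
Proof.
elim: (span_pieces x) => {x} [x [a [b /piece_sub_star]] // | | x y _ Sx _ Sy | k x _ Sx].
- by rewrite star0 subrr; apply: kspan_0.
- by rewrite starD opprD addrACA; apply: kspan_add.
- by rewrite starZ -scalerBr; apply: kspan_scale.
Qed.

Lemma nonloop_orth e f : s e <> r e -> e <> f ->
  [/\ eA e ** eA f = 0, eA e ** esA f = 0, esA e ** eA f = 0 & esA e ** esA f = 0].
Proof.
move=> ne ef; have [no_out no_in rng_e] := nonloop_isolated ne.
split.
- exact/edge_edge0/nesym/no_out.
- by apply: edge_ghost0 => E; apply: ef; rewrite (rng_e f (esym E)).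
- exact: ghost_edge_neq.
- exact/ghost_ghost0/nesym/no_in.
Qed.

Lemma loop_nonloop_orth l x e : s l = r l -> loop_alg l x -> s e <> r e ->
  [/\ x ** eA e = 0, x ** esA e = 0, eA e ** x = 0 & esA e ** x = 0].
Proof.
move=> ll lx ne; have [xl xr] := loop_alg_unit ll lx.
have apart : s e <> s l /\ r e <> s l.
  by split=> E; apply: ne; rewrite (@loop_isolated l e ll); auto.
split.
- by apply: mul_vertex_mismatch xr (src_edge e) _ => /esym; case: apart.
- by apply: mul_vertex_mismatch xr (rng_ghost e) _ => /esym; case: apart.
- by apply: mul_vertex_mismatch (edge_rng e) xl _; case: apart.
- by apply: mul_vertex_mismatch (ghost_src e) xl _; case: apart.
Qed.

Lemma comm_piece_comm x y : comm_piece x -> comm_piece y -> x ** y = y ** x.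
Proof.
have loop_edge l z e : s l = r l -> loop_alg l z -> s e <> r e ->
    z ** (eA e - esA e) = (eA e - esA e) ** z.
  move=> ll lz ne; have [ze zg ez gz] := loop_nonloop_orth ll lz ne.
  by rewrite mulBr mulBl ze zg ez gz.
move=> /= [[l ll lx] | [e ne ->]] [[l' ll' ly] | [f nf ->]].
- have [E|N] := pselect (s l = s l').
    have ll'l : l' = l by apply: loop_isolated => //; left; rewrite E.
    by subst l'; apply: loop_alg_comm lx ly.
  have [xl xr] := loop_alg_unit ll lx; have [yl yr] := loop_alg_unit ll' ly.
  by rewrite (mul_vertex_mismatch xr yl N) (mul_vertex_mismatch yr xl (nesym N)).
- exact: loop_edge _ _ _ ll lx nf.
- exact: esym (loop_edge _ _ _ ll' ly ne).
- have [<-//|ef] := pselect (e = f).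
  have [ee eg ge gg] := nonloop_orth ne ef.
  have [fe fg gf' ff] := nonloop_orth nf (nesym ef).
  by rewrite !mulBr !mulBl ee eg ge gg fe fg gf' ff.
Qed.

Lemma skew_comm : (2%:R : K) != 0 -> forall x y, skew x -> skew y -> x ** y = y ** x.
Proof.
move=> two_neq0 x y sx sy.
have := kspan_comm comm_piece_comm (sub_star_span x) (sub_star_span y).
rewrite sx sy !opprK -!mulr2n -!scaler_nat !mulZl !mulZr !scalerA.
move=> /(congr1 (fun w => (2%:R * 2%:R)^-1 *: w)).
by rewrite !scalerA mulVf ?mulf_neq0 // !scale1r.
Qed.

Lemma isolated_lie_nilpotent_solvable : (2%:R : K) != 0 ->
  lie_nilpotent mul star /\ lie_solvable mul star.
Proof. by move=> two_neq0; apply: commuting_skew_lie_nilpotent => x y; apply: skew_comm. Qed.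

End Sufficiency.
Lemma so3_triple_derived X Y Z : skew X -> skew Y -> skew Z ->
  lie_br mul X Y = Z -> lie_br mul Y Z = X -> lie_br mul Z X = Y ->
  forall n, derived mul star n X.
Proof.
move=> sX sY sZ XY YZ ZX n.
suff : [/\ derived mul star n X, derived mul star n Y & derived mul star n Z] by case.
elim: n => [|n [dX dY dZ]] //=.
by split; apply: kspan_gen; [exists Y, Z | exists Z, X | exists X, Y].
Qed.

Definition cpow (c : A) (m : nat) (x : A) : A := iter m (mul c) x.

Lemma cpowS c m x : cpow c m.+1 x = c ** cpow c m x. Proof. by []. Qed.
Lemma cpow_add c m n x : cpow c m (cpow c n x) = cpow c (m + n) x.
Proof. by rewrite /cpow iterD. Qed.
Lemma cpowD c m x y : cpow c m (x + y) = cpow c m x + cpow c m y.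
Proof. by elim: m => [//|m IH]; rewrite !cpowS IH mulDr. Qed.
Lemma cpowZ c m k x : cpow c m (k *: x) = k *: cpow c m x.
Proof. by elim: m => [//|m IH]; rewrite !cpowS IH mulZr. Qed.
Lemma cpowN c m x : cpow c m (- x) = - cpow c m x.
Proof. by rewrite -scaleN1r cpowZ scaleN1r. Qed.
Lemma cpowB c m x y : cpow c m (x - y) = cpow c m x - cpow c m y.
Proof. by rewrite cpowD cpowN. Qed.
Lemma cpowMl c m x y : cpow c m x ** y = cpow c m (x ** y).
Proof. by elim: m => [//|m IH]; rewrite !cpowS -mulA IH. Qed.
Lemma cpowMr c m x y : c ** x = x ** c -> x ** cpow c m y = cpow c m (x ** y).
Proof. by move=> cx; elim: m => [//|m IH]; rewrite !cpowS mulA -cx -mulA IH. Qed.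


Lemma cpow_lie_br c m n x y : c ** x = x ** c -> c ** y = y ** c ->
  lie_br mul (cpow c m x) (cpow c n y) = cpow c (m + n) (lie_br mul x y).
Proof.
move=> cx cy; rewrite /lie_br cpowB !cpowMl (cpowMr _ _ cx) (cpowMr _ _ cy) !cpow_add.
by rewrite addnC.
Qed.

(* Odd powers of the skew c turn the symmetric H and P into skew elements. *)
Lemma twisted_sl2_derived c X H P : (2%:R : K) != 0 -> star c = - c ->
  c ** X = X ** c -> c ** H = H ** c -> c ** P = P ** c ->
  skew X -> star H = H -> star P = P ->
  lie_br mul X H = - (P + P) -> lie_br mul X P = H + H -> lie_br mul H P = X + X ->
  forall n, exists a b, [/\ derived mul star n (cpow c a.*2 X),
    derived mul star n (cpow c b.*2.+1 H) & derived mul star n (cpow c b.*2.+1 P)].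
Proof.
move=> two_neq0 sc cX cH cP sX sH sP XH XP HP.
have half (w : A) : (2%:R)^-1 *: (w + w) = w.
  by rewrite -mulr2n -scaler_nat scalerA mulVf // scale1r.
have odd_even a b : (a.*2 + b.*2.+1 = (a + b).*2.+1)%N by rewrite doubleD addnS.
elim=> [|n [a [b [dX dH dP]]]].
  by exists 0%N, 0%N; split; rewrite //= /Defs.skew starM sc mulNr ?sH ?sP ?cH ?cP.
have br k x y : derived mul star n x -> derived mul star n y ->
    derived mul star n.+1 (k *: lie_br mul x y).
  by move=> dx dy; apply/kspan_scale/kspan_gen; exists x, y.
exists b.*2.+1, (a + b)%N; split.
- rewrite -[cpow _ _ X]half -cpowD -HP -addnn -cpow_lie_br //.
  exact: br.
- rewrite -[cpow _ _ H]half -cpowD -XP -odd_even -cpow_lie_br //.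
  exact: br.
- rewrite -[cpow _ _ P]half -cpowD -[_ + _]opprK cpowN -XH -odd_even -cpow_lie_br //.
  by rewrite -scaleN1r scalerA; apply: br.
Qed.

Definition isometries (n : nat) (g : nat -> A) (p : A) : Prop :=
  [/\ forall i, (i < n)%N -> star (g i) ** g i = p,
      forall i, (i < n)%N -> g i ** p = g i &
      forall i j, (i < j < n)%N -> star (g i) ** g j = 0].

Definition munit (g : nat -> A) (i j : nat) : A := g i ** star (g j).

Lemma munit_star g i j : star (munit g i j) = munit g j i.
Proof. by rewrite /munit starM starK. Qed.

Lemma isometries_mul n g p : isometries n g p -> forall i j, (i < n)%N -> (j < n)%N ->
  star (g i) ** g j = if i == j then p else 0.
Proof.
case=> diag _ off i j ilt jlt; case: ltngtP => [ij | ji | <-].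
- by rewrite off // ij.
- by rewrite -[LHS]starK starM starK off ?ji // star0.
- exact: diag.
Qed.

Lemma munit_mul n g p : isometries n g p ->
  forall i j k l, (i < n)%N -> (j < n)%N -> (k < n)%N ->
  munit g i j ** munit g k l = if j == k then munit g i l else 0.
Proof.
move=> iso i j k l ilt jlt klt; rewrite /munit mulA -(mulA (g i)) (isometries_mul iso) //.
by case: ifP => _; [case: iso => _ -> | rewrite mul0r mul0l].
Qed.

Lemma munit_corner n g p i j : isometries n g p -> (i < n)%N -> (j < n)%N ->
  star (g i) ** munit g i j ** g j = p.
Proof.
case=> diag gp _ ilt jlt.
by rewrite /munit mulA diag // -mulA diag // -{1}(diag i) // -mulA gp // diag.
Qed.

Lemma munit_antisym_corner n g p : isometries n g p -> (1 < n)%N ->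
  munit g 0 0 ** (munit g 0 1 - munit g 1 0) ** munit g 1 1 = munit g 0 1.
Proof.
move=> iso n_gt1; have n_gt0 : (0 < n)%N by apply: ltn_trans n_gt1.
by rewrite mulBr mulBl !(munit_mul iso) //= mul0l subr0.
Qed.

Lemma munit3_brackets g p X Y Z : isometries 3 g p ->
  X = munit g 0 1 - munit g 1 0 -> Y = munit g 1 2 - munit g 2 1 ->
  Z = munit g 0 2 - munit g 2 0 ->
  [/\ lie_br mul X Y = Z, lie_br mul Y Z = X & lie_br mul Z X = Y].
Proof.
move=> iso -> -> ->; have mm := munit_mul iso.
by split; rewrite /lie_br !mulBl !mulBr !mm //= !(subr0, sub0r, opprK, opprB, addr0, add0r)
  addrC.
Qed.

Lemma munit2_brackets g p X H P : isometries 2 g p ->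
  X = munit g 0 1 - munit g 1 0 -> H = munit g 0 0 - munit g 1 1 ->
  P = munit g 0 1 + munit g 1 0 ->
  [/\ lie_br mul X H = - (P + P), lie_br mul X P = H + H & lie_br mul H P = X + X].
Proof.
move=> iso -> -> ->; have mm := munit_mul iso.
split; rewrite /lie_br !mulBl !mulBr ?mulDl ?mulDr !mm //=.
- rewrite !(subr0, sub0r, opprK, opprB, addr0, add0r, opprD).
  by congr (_ + _); rewrite addrC.
- by rewrite !(subr0, sub0r, opprK, opprB, addr0, add0r, opprD, oppr0).
- by rewrite !(subr0, sub0r, opprK, opprB, addr0, add0r, opprD, oppr0).
Qed.

Lemma isometries3_nonvanishing g0 g1 g2 p :
  star g0 ** g0 = p -> star g1 ** g1 = p -> star g2 ** g2 = p ->
  g0 ** p = g0 -> g1 ** p = g1 -> g2 ** p = g2 ->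
  star g0 ** g1 = 0 -> star g0 ** g2 = 0 -> star g1 ** g2 = 0 ->
  p <> 0 -> derived_nonvanishing.
Proof.
move=> d0 d1 d2 u0 u1 u2 o01 o02 o12 p_neq0.
pose g i := nth 0 [:: g0; g1; g2] i.
have iso : isometries 3 g p.
  split=> [i|i|i j]; rewrite /g.
  - by case: i => [|[|[|//]]].
  - by case: i => [|[|[|//]]].
  - by case: i => [|[|[|i]]]; case: j => [|[|[|j]]]; rewrite //= ?andbF.
have skew_munit i j : skew (munit g i j - munit g j i).
  by rewrite /Defs.skew starB !munit_star opprB.
have [XY YZ ZX] := munit3_brackets iso erefl erefl erefl.
move=> n; exists (munit g 0 1 - munit g 1 0).
  exact: so3_triple_derived (skew_munit _ _) (skew_munit _ _) (skew_munit _ _) XY YZ ZX n.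
move=> X0; apply: p_neq0; rewrite -(munit_corner (i := 0) (j := 1) iso) //.
by rewrite -(munit_antisym_corner iso) // X0 mul0r mul0l mul0r mul0l.
Qed.

Lemma commuteM c x y : c ** x = x ** c -> c ** y = y ** c -> c ** (x ** y) = x ** y ** c.
Proof. by move=> cx cy; rewrite mulA cx -mulA cy mulA. Qed.
Lemma commuteD c x y : c ** x = x ** c -> c ** y = y ** c -> c ** (x + y) = (x + y) ** c.
Proof. by move=> cx cy; rewrite mulDl mulDr cx cy. Qed.
Lemma commuteB c x y : c ** x = x ** c -> c ** y = y ** c -> c ** (x - y) = (x - y) ** c.
Proof. by move=> cx cy; rewrite mulBl mulBr cx cy. Qed.

Lemma sub_star_commute t x : t ** x = x ** t -> t ** star x = star x ** t ->
  (t - star t) ** x = x ** (t - star t).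
Proof.
move=> tx txs; have := congr1 star txs; rewrite !starM starK => tsx.
by rewrite mulBl mulBr tx tsx.
Qed.

Lemma isometry_pair h p : star h ** h = p -> h ** p = h -> p ** h = 0 ->
  isometries 2 (fun i => if i == 0%N then h else p) p.
Proof.
move=> hh hp ph; have sp : star p = p by rewrite -hh starM starK.
have pp : p ** p = p by rewrite -{1}hh -mulA hp.
split=> [i|i|i j].
- by case: i => [|[|//]] _ /=; rewrite ?hh // sp pp.
- by case: i => [|[|//]] _ /=; rewrite ?hp ?pp.
- case: i => [|[|i]]; case: j => [|[|j]]; rewrite //= ?andbF // => _.
  by rewrite -sp -starM ph star0.
Qed.

Lemma isometries2_central_nonvanishing (h p t : A) : (2%:R : K) != 0 ->
  star h ** h = p -> h ** p = h -> p ** h = 0 ->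
  t ** h = h ** t -> t ** star h = star h ** t ->
  (forall m, cpow (t - star t) m p <> 0) -> derived_nonvanishing.
Proof.
move=> two_neq0 hh hp ph th ths cp_neq0.
pose g i := if i == 0%N then h else p.
have iso : isometries 2 g p by apply: isometry_pair.
pose c := t - star t.
have sc : star c = - c by rewrite /c starB starK opprB.
have ch : c ** h = h ** c by apply: sub_star_commute.
have chs : c ** star h = star h ** c by apply: sub_star_commute; rewrite // starK.
have cp : c ** p = p ** c by rewrite -hh; apply: commuteM.
have sp : star p = p by rewrite -hh starM starK.
have cm i j : c ** munit g i j = munit g i j ** c.
  by apply: commuteM; rewrite /g; case: ifP => _; rewrite ?sp.
have [XH XP HP] := munit2_brackets iso erefl erefl erefl.
have sX : skew (munit g 0 1 - munit g 1 0) by rewrite /Defs.skew starB !munit_star opprB.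
have sH : star (munit g 0 0 - munit g 1 1) = munit g 0 0 - munit g 1 1.
  by rewrite starB !munit_star.
have sP : star (munit g 0 1 + munit g 1 0) = munit g 0 1 + munit g 1 0.
  by rewrite starD !munit_star addrC.
have derX := twisted_sl2_derived two_neq0 sc (commuteB (cm _ _) (cm _ _))
  (commuteB (cm _ _) (cm _ _)) (commuteD (cm _ _) (cm _ _)) sX sH sP XH XP HP.
move=> n; have [m [_ [dX _ _]]] := derX n.
exists (cpow c m.*2 (munit g 0 1 - munit g 1 0)) => // X0; apply: (cp_neq0 m.*2).
have <- : star h ** (munit g 0 0 ** cpow c m.*2 (munit g 0 1 - munit g 1 0) ** munit g 1 1)
    ** p = cpow c m.*2 p.
  rewrite (cpowMr _ _ (cm 0%N 0%N)) !cpowMl (cpowMr _ _ chs) cpowMl.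
  by rewrite (munit_antisym_corner iso) // (munit_corner (i := 0) (j := 1) iso).
by rewrite X0 mul0r mul0l mul0r mul0l.
Qed.
Section Necessity.
Variable rho : A -> linop K V Ed.
Hypothesis rhoD : {morph rho : x y / x + y}.
Hypothesis rhoM : {morph rho : x y / x ** y >-> linop_mul x y}.
Hypothesis rho_v : forall v, rho (vA v) = rep_v K s r v.
Hypothesis rho_e : forall e, rho (eA e) = rep_e K s r e.
Hypothesis rho_g : forall e, rho (esA e) = rep_g K s r e.

Lemma rho0 : rho 0 = 0.
Proof. by apply: (@addrI _ (rho 0)); rewrite -rhoD !addr0. Qed.
Lemma rhoB x y : rho (x - y) = rho x - rho y.
Proof. by apply: (@addIr _ (rho y)); rewrite -rhoD !subrK. Qed.

Lemma vertex_neq0 w : vA w <> 0.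
Proof. by move=> w0; apply: (@rep_vertex_neq0 K V Ed s r w); rewrite -rho_v w0 rho0. Qed.

Lemma rho_cpow c m x : rho (cpow c m x) = iter m (linop_mul (rho c)) (rho x).
Proof. by elim: m => [//|m IH]; rewrite cpowS rhoM IH. Qed.

Lemma rep_cpow_neq0 t m x :
  iter m (linop_mul (rho t - rho (star t))) (rho x) <> 0 -> cpow (t - star t) m x <> 0.
Proof. by move=> ne0 x0; apply: ne0; rewrite -rhoB -rho_cpow x0 rho0. Qed.

Lemma two_nonloops_same_range e f : s e <> r e -> s f <> r f -> e <> f -> r e = r f ->
  derived_nonvanishing.
Proof.
move=> ne nf ef ref.
apply: (@isometries3_nonvanishing (vA (r e)) (eA e) (eA f) (vA (r e)));
  rewrite ?star_vertex ?star_edge.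
- exact: vertex_idem.
- exact: ghost_edge.
- by rewrite ghost_edge ref.
- exact: vertex_idem.
- exact: edge_rng.
- by rewrite ref edge_rng.
- by rewrite vertex_edge0 //; exact/nesym.
- by rewrite vertex_edge0 // ref; exact/nesym.
- exact: ghost_edge_neq.
- exact: vertex_neq0.
Qed.

Lemma loop_with_exit l g : s l = r l -> g <> l -> s g = s l -> derived_nonvanishing.
Proof.
move=> ll gl sg.
apply: (@isometries3_nonvanishing (eA g) (eA l ** eA g) (eA l ** eA l ** eA g) (vA (r g)));
  rewrite ?starM ?star_edge.
- exact: ghost_edge.
- by rewrite !mulA ghost_edgeA -ll -sg src_edgeA ghost_edge.
- by rewrite !mulA ghost_edgeA -ll src_edgeA ghost_edgeA -ll -sg src_edgeA ghost_edge.
- exact: edge_rng.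
- exact: edge_rngA.
- exact: edge_rngA.
- by rewrite mulA ghost_edge_neq // mul0l.
- by rewrite !mulA ghost_edge_neq // !mul0l.
- by rewrite !mulA ghost_edgeA -ll src_edgeA ghost_edge_neq // mul0l.
- exact: vertex_neq0.
Qed.

Lemma nonloop_path2 e f : s e <> r e -> s f <> r f -> r e = s f -> s e <> r f ->
  derived_nonvanishing.
Proof.
move=> ne nf ref ser.
have fe : f <> e by move=> E; apply: ne; rewrite ref E.
apply: (@isometries3_nonvanishing (vA (r f)) (eA f) (eA e ** eA f) (vA (r f)));
  rewrite ?star_vertex ?starM ?star_edge.
- exact: vertex_idem.
- exact: ghost_edge.
- by rewrite !mulA ghost_edgeA ref src_edgeA ghost_edge.
- exact: vertex_idem.
- exact: edge_rng.
- exact: edge_rngA.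
- by rewrite vertex_edge0 //; exact/nesym.
- by rewrite mulA vertex_edge0 ?mul0l //; exact/nesym.
- by rewrite mulA ghost_edge_neq ?mul0l.
- exact: vertex_neq0.
Qed.

Lemma two_cycle_with_exit e f g : s e <> r e -> r e = s f -> r f = s e ->
  s g = s e -> g <> e -> derived_nonvanishing.
Proof.
move=> ne ref rfe sg ge.
have fe : f <> e by move=> E; apply: ne; rewrite -rfe E.
have fg : f <> g by move=> E; apply: ne; rewrite ref E sg.
apply: (@isometries3_nonvanishing (eA g) (eA f ** eA g) (eA e ** eA f ** eA g) (vA (r g)));
  rewrite ?starM ?star_edge.
- exact: ghost_edge.
- by rewrite !mulA ghost_edgeA rfe -sg src_edgeA ghost_edge.
- by rewrite !mulA ghost_edgeA ref src_edgeA ghost_edgeA rfe -sg src_edgeA ghost_edge.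
- exact: edge_rng.
- exact: edge_rngA.
- exact: edge_rngA.
- by rewrite mulA ghost_edge_neq ?mul0l // => /nesym.
- by rewrite !mulA ghost_edge_neq ?mul0l.
- by rewrite !mulA ghost_edge_neqA ?mul0l.
- exact: vertex_neq0.
Qed.

Hypothesis two_neq0 : (2%:R : K) != 0.

Lemma exitless_loop_entered e f : s e = r e -> (forall g, s g = s e -> g = e) ->
  r f = s e -> s f <> s e -> derived_nonvanishing.
Proof.
move=> le only_e rf sf.
have fe : f <> e by move=> E; apply: sf; rewrite E.
have nf : s f <> r f by rewrite rf.
have ee_f : eA e ** eA f = 0 by apply: edge_edge0; rewrite -le; exact/nesym.
have ff : eA f ** eA f = 0 by apply: edge_edge0; exact/nesym.
have gg : esA f ** esA f = 0 by apply: ghost_ghost0.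
apply: (@isometries2_central_nonvanishing (eA f) (vA (r f)) (eA e + eA f ** eA e ** esA f)).
- exact: two_neq0.
- by rewrite star_edge ghost_edge.
- exact: edge_rng.
- by rewrite vertex_edge0 //; exact/nesym.
- rewrite mulDl mulDr ee_f add0r ghost_edgeA rf le edge_rngA.
  by rewrite [in RHS]mulA [in RHS]mulA ff !mul0l addr0.
- rewrite star_edge mulDl mulDr -(mulA (eA f ** eA e)) gg mul0r addr0.
  by rewrite ghost_edge_neq // add0r !mulA ghost_edge rf src_edge.
- move=> m; apply: rep_cpow_neq0.
  rewrite starD !starM star_ghost !star_edge !(rhoD, rhoM, rho_v, rho_e, rho_g) rf.
  by apply: (@loop_rep_iter_neq0 _ _ _ s r e f (s e)) => // g /only_e.
Qed.

Lemma exitless_two_cycle e f : s e <> r e -> r e = s f -> r f = s e ->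
  (forall g, s g = s e -> g = e) -> (forall g, s g = s f -> g = f) -> derived_nonvanishing.
Proof.
move=> ne ref rfe only_e only_f.
have ef : e <> f by move=> E; apply: ne; rewrite ref E.
have ee : eA e ** eA e = 0 by apply: edge_edge0; exact/nesym.
have CKe : vA (s e) = eA e ** esA e.
  by apply: vertex_CK1 => g; split=> [/only_e | ->].
apply: (@isometries2_central_nonvanishing (eA e) (vA (r e)) (eA e ** eA f + eA f ** eA e)).
- exact: two_neq0.
- by rewrite star_edge ghost_edge.
- exact: edge_rng.
- by rewrite vertex_edge0 //; exact/nesym.
- rewrite mulDl mulDr -(mulA (eA f)) ee mul0r addr0.
  by rewrite [X in _ = X + _]mulA ee mul0l add0r mulA.
- rewrite star_edge mulDl mulDr -(mulA (eA e)) edge_ghost0 ?mul0r ?add0r; last by rewrite rfe.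
  rewrite -mulA -CKe -rfe edge_rng.
  by rewrite mulA ghost_edge ref src_edge mulA ghost_edge_neq // mul0l addr0.
- move=> m; apply: rep_cpow_neq0.
  rewrite starD !starM !star_edge !(rhoD, rhoM, rho_v, rho_e, rho_g).
  apply: (@cycle2_rep_iter_neq0 _ _ _ s r e f (s e) (r e)) => //.
  by rewrite ref.
Qed.

Lemma loop_entered_nonvanishing e f : s e = r e -> f <> e -> r f = s e ->
  derived_nonvanishing.
Proof.
move=> le fe rf.
have [[g ge sg] | no_exit] := pselect (exists2 g, g <> e & s g = s e).
  exact: loop_with_exit le ge sg.
have only_e g : s g = s e -> g = e.
  by move=> sg; apply: contrapT => ge; apply: no_exit; exists g.
have [lf|nf] := pselect (s f = r f); first by apply: loop_with_exit le fe _; rewrite lf rf.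
by apply: (exitless_loop_entered le only_e rf) => /only_e.
Qed.

Lemma two_cycle_nonvanishing e f : s e <> r e -> r e = s f -> r f = s e ->
  derived_nonvanishing.
Proof.
move=> ne ref rfe.
have nf : s f <> r f by rewrite -ref rfe; exact/nesym.
have [[g ge sg] | no_exit_e] := pselect (exists2 g, g <> e & s g = s e).
  exact: two_cycle_with_exit ne ref rfe sg ge.
have [[g gf sg] | no_exit_f] := pselect (exists2 g, g <> f & s g = s f).
  exact: two_cycle_with_exit nf rfe ref sg gf.
apply: exitless_two_cycle ne ref rfe _ _ => g sg; apply: contrapT => ng.
- by apply: no_exit_e; exists g.
- by apply: no_exit_f; exists g.
Qed.

Lemma not_disjoint_union_nonvanishing : ~ disjoint_union_E1_E2_E4 s r ->
  derived_nonvanishing.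
Proof.
move=> notDU; apply: contrapT => vanish; apply/notDU/good_graph_disjoint_union.
- move=> e f ref; apply: contrapT => ef; apply: vanish.
  have [le|ne] := pselect (s e = r e).
    by apply: (loop_entered_nonvanishing le (nesym ef)); rewrite -ref le.
  have [lf|nf] := pselect (s f = r f).
    by apply: (loop_entered_nonvanishing lf ef); rewrite ref lf.
  exact: two_nonloops_same_range ne nf ef ref.
- move=> l g ll sg; apply: contrapT => gl; apply: vanish.
  exact: loop_with_exit ll gl sg.
- move=> e f ne nf ref; apply: vanish.
  have [ser|ser] := pselect (s e = r f); first exact: two_cycle_nonvanishing ne ref (esym ser).
  exact: nonloop_path2 ne nf ref ser.
Qed.

End Necessity.
End LeavittAlgebra.

Unset Implicit Arguments.

Theorem corollary4p12 (K : fieldType) (V : Type) (Ed : eqType) (s r : Ed -> V)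
    (A : lmodType K) (mul : A -> A -> A) (vA : V -> A) (eA esA : Ed -> A)
    (star : A -> A) :
  (2%:R : K) != 0 ->
  row_finite s ->
  is_leavitt_path_algebra s r mul vA eA esA ->
  standard_involution mul vA eA esA star ->
  (lie_solvable mul star <-> disjoint_union_E1_E2_E4 s r) /\
  (lie_nilpotent mul star <-> disjoint_union_E1_E2_E4 s r).
Proof.
move=> two_neq0 _ [nalg leavitt generated universal] inv.
have abelian : disjoint_union_E1_E2_E4 s r ->
    lie_nilpotent mul star /\ lie_solvable mul star.
  move=> DU; exact: isolated_lie_nilpotent_solvable nalg leavitt inv
    (disjoint_union_loop DU) (disjoint_union_nonloop DU) generated two_neq0.
have [rho [rhoD [_ [rhoM [rho_v [rho_e rho_g]]]]]] :=
  universal _ _ _ _ _ (linop_nalg K V Ed) (rep_leavitt K s r).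
have non_abelian : ~ disjoint_union_E1_E2_E4 s r ->
    ~ lie_solvable mul star /\ ~ lie_nilpotent mul star.
  move=> notDU; apply: (derived_nonvanishing_not_solvable nalg inv).
  exact (not_disjoint_union_nonvanishing nalg leavitt inv rhoD rhoM rho_v rho_e rho_g
    two_neq0 notDU).
have [DU|notDU] := pselect (disjoint_union_E1_E2_E4 s r).
  by have [? ?] := abelian DU; split; split.
by have [? ?] := non_abelian notDU; split; split.
Qed.
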